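(* Suppose $V \models \mathsf{ZFC}^- + \mathsf{DC}_{<\mathrm{Ord}}$. Then for any proper class $\mathcal{C}$ definable over $V$ and any non-zero ordinal $\gamma$, there is a definable surjection of $\mathcal{C}$ onto $\gamma$.
   Context: $\mathsf{ZFC}^-$ denotes the theory with axioms Empty Set, Extensionality, Pairing, Union, Infinity, the Foundation, Separation, Replacement and Collection Schemes, and the Well-Ordering Principle (no Power Set). $\mathsf{ZFC}^- + \mathsf{DC}_{<\mathrm{Ord}}$ is $\mathsf{ZFC}^-$ together with the $\mathsf{DC}_\mu$-Scheme for every infinite cardinal $\mu$, where the $\mathsf{DC}_\mu$-Scheme states: for all formulas $\varphi,\psi$ and sets $u,w$, if there is $y$ with $\psi(y,u)$ and for every $\alpha < \mu$ and every sequence $s = \langle x_\beta : \beta < \alpha\rangle$ with $\psi(x_\beta,u)$ for all $\beta$ there is $z$ with $\psi(z,u)$ and $\varphi(s,z,w)$, then there is a function $f$ with domain $\mu$ such that for each $\alpha < \mu$, $\psi(f(\alpha),u)$ and $\varphi(f\restriction\alpha, f(\alpha), w)$. *)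

(* A model V of set theory is a type M with a binary
   relation E (E x y  means  x \in y).  First-order formulas in the language
   {\in, =} are a deep embedding with de Bruijn variables; parameters are
   supplied by an environment.  Axiom schemes are stated semantically:
   "V satisfies every instance (with every choice of parameters)". *)

Inductive form : Type :=
| FMem : nat -> nat -> form
| FEq  : nat -> nat -> form
| FFalse : form
| FNot : form -> form
| FAnd : form -> form -> form
| FOr  : form -> form -> form
| FImp : form -> form -> form
| FAll : form -> form            (* binds v_0 *)
| FEx  : form -> form.

Definition scons {M : Type} (x : M) (rho : nat -> M) : nat -> M :=
  fun n => match n with 0 => x | S k => rho k end.

Fixpoint sat {M : Type} (E : M -> M -> Prop) (rho : nat -> M) (f : form) : Prop :=
  match f with
  | FMem i j => E (rho i) (rho j)
  | FEq i j => rho i = rho j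
  | FFalse => False
  | FNot g => ~ sat E rho g
  | FAnd g h => sat E rho g /\ sat E rho h
  | FOr g h => sat E rho g \/ sat E rho h
  | FImp g h => sat E rho g -> sat E rho h
  | FAll g => forall x, sat E (scons x rho) g
  | FEx g => exists x, sat E (scons x rho) g
  end.

Definition sat1 {M} (E : M -> M -> Prop) (phi : form) (rho : nat -> M) (x : M) : Prop :=
  sat E (scons x rho) phi.
Definition sat2 {M} (E : M -> M -> Prop) (phi : form) (rho : nat -> M) (x y : M) : Prop :=
  sat E (scons x (scons y rho)) phi.

Section Internal.
Context {M : Type} (E : M -> M -> Prop).

Definition is_empty (a : M) : Prop := forall z, ~ E z a.
Definition is_upair (p a b : M) : Prop := forall z, E z p <-> (z = a \/ z = b).
Definition is_opair (p a b : M) : Prop :=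
  forall z, E z p <-> (is_upair z a a \/ is_upair z a b).
Definition is_union (u a : M) : Prop := forall z, E z u <-> exists y, E y a /\ E z y.
Definition is_succ (s a : M) : Prop := forall z, E z s <-> (E z a \/ z = a).
Definition transitive (a : M) : Prop := forall y z, E z y -> E y a -> E z a.

Definition rel (r x y : M) : Prop := exists p, E p r /\ is_opair p x y.

Definition well_orders (r a : M) : Prop :=
  (forall x, E x a -> ~ rel r x x) /\
  (forall x y z, E x a -> E y a -> E z a -> rel r x y -> rel r y z -> rel r x z) /\
  (forall x y, E x a -> E y a -> x = y \/ rel r x y \/ rel r y x) /\
  (forall b, (forall z, E z b -> E z a) -> (exists z, E z b) ->
     exists m, E m b /\ forall z, E z b -> ~ rel r z m).

Definition ordinal (a : M) : Prop :=
  transitive a /\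
  (forall x, E x a -> ~ E x x) /\
  (forall x y z, E x a -> E y a -> E z a -> E x y -> E y z -> E x z) /\
  (forall x y, E x a -> E y a -> x = y \/ E x y \/ E y x) /\
  (forall b, (forall z, E z b -> E z a) -> (exists z, E z b) ->
     exists m, E m b /\ forall z, E z b -> ~ E z m).

Definition is_function_on (f d : M) : Prop :=
  (forall p, E p f -> exists x y, is_opair p x y /\ E x d) /\
  (forall x, E x d -> exists y, rel f x y /\ forall y', rel f x y' -> y' = y).

Definition is_restriction (g f a : M) : Prop :=
  forall p, E p g <-> (E p f /\ exists x y, is_opair p x y /\ E x a).

Definition equinumerous (a b : M) : Prop :=
  exists f, is_function_on f a /\
    (forall x x' y, rel f x y -> rel f x' y -> x = x') /\
    (forall y, E y b <-> exists x, E x a /\ rel f x y).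

Definition natural_number (n : M) : Prop :=
  ordinal n /\ forall y, (E y n \/ y = n) -> (is_empty y \/ exists z, is_succ y z).

Definition cardinal (m : M) : Prop :=
  ordinal m /\ forall a, E a m -> ~ equinumerous a m.

Definition infinite_cardinal (m : M) : Prop :=
  cardinal m /\ ~ (exists n, natural_number n /\ equinumerous n m).

Definition Ax_Empty : Prop := exists x, is_empty x.
Definition Ax_Ext : Prop := forall a b, (forall z, E z a <-> E z b) -> a = b.
Definition Ax_Pair : Prop := forall a b, exists p, is_upair p a b.
Definition Ax_Union : Prop := forall a, exists u, is_union u a.
Definition Ax_Inf : Prop :=
  exists x, (exists e, is_empty e /\ E e x) /\
    forall y, E y x -> exists s, is_succ s y /\ E s x.
Definition Sch_Found : Prop :=
  forall phi rho, (exists x, sat1 E phi rho x) ->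
    exists x, sat1 E phi rho x /\ forall y, E y x -> ~ sat1 E phi rho y.
Definition Sch_Sep : Prop :=
  forall phi rho a, exists b, forall x, E x b <-> (E x a /\ sat1 E phi rho x).
(* phi(y, x): v_0 = y (value), v_1 = x (argument) *)
Definition Sch_Repl : Prop :=
  forall phi rho a,
    (forall x, E x a -> exists y, sat2 E phi rho y x /\
                        forall y', sat2 E phi rho y' x -> y' = y) ->
    exists b, forall y, E y b <-> exists x, E x a /\ sat2 E phi rho y x.
Definition Sch_Coll : Prop :=
  forall phi rho a,
    (forall x, E x a -> exists y, sat2 E phi rho y x) ->
    exists b, forall x, E x a -> exists y, E y b /\ sat2 E phi rho y x.
Definition Ax_WO : Prop := forall a, exists r, well_orders r a.

Definition ZFCminus : Prop :=
  Ax_Empty /\ Ax_Ext /\ Ax_Pair /\ Ax_Union /\ Ax_Inf /\ Sch_Found /\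
  Sch_Sep /\ Sch_Repl /\ Sch_Coll /\ Ax_WO.

(* DC_mu scheme.  psi(y; u): v_0 = y.  phi(z, s; w): v_0 = z, v_1 = s.
   Parameters u, w are given by environments rho_psi, rho_phi. *)
Definition DC_scheme (mu : M) : Prop :=
  forall phi psi rho_phi rho_psi,
    (exists y, sat1 E psi rho_psi y) ->
    (forall al s, E al mu -> is_function_on s al ->
       (forall b x, E b al -> rel s b x -> sat1 E psi rho_psi x) ->
       exists z, sat1 E psi rho_psi z /\ sat2 E phi rho_phi z s) ->
    exists f, is_function_on f mu /\
      forall al, E al mu ->
        exists y g, rel f al y /\ is_restriction g f al /\
          sat1 E psi rho_psi y /\ sat2 E phi rho_phi y g.

Definition DC_ltOrd : Prop := forall mu, infinite_cardinal mu -> DC_scheme mu.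

Definition proper_class (theta : form) (rho : nat -> M) : Prop :=
  ~ exists c, forall x, E x c <-> sat1 E theta rho x.

Definition definable_surjection_onto (theta : form) (rho : nat -> M)
    (sigma : form) (rho' : nat -> M) (g : M) : Prop :=
  (forall y x, sat2 E sigma rho' y x -> sat1 E theta rho x) /\
  (forall x, sat1 E theta rho x ->
     exists y, E y g /\ sat2 E sigma rho' y x /\
       forall y', sat2 E sigma rho' y' x -> y' = y) /\
  (forall y, E y g -> exists x, sat1 E theta rho x /\ sat2 E sigma rho' y x).

End Internal.

(* Let delta be the larger of gamma and omega, and let mu be the
   least ordinal in bijection with delta, say via h : mu -> delta.  Then mu
   is a cardinal, and it is infinite by the pigeonhole principle.  Since C
   is not a set, the range of a set never exhausts C, so DC_mu gives a
   sequence f : mu -> C with f(a) outside the range of f restricted to a;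
   such an f is injective.  Fixing e in gamma, the class function sending
   f(a) to h(a) when h(a) lies in gamma and every other element of C to e
   is defined by a formula with parameters f, h, gamma, e, rho, and maps C
   onto gamma. *)

From Pilot Require Import Defs.
From Stdlib Require Import Setoid Classical.

Definition FIff (g h : form) : form := FAnd (FImp g h) (FImp h g).

Definition upr (xi : nat -> nat) : nat -> nat :=
  fun n => match n with 0 => 0 | S k => S (xi k) end.

Fixpoint ren (xi : nat -> nat) (f : form) : form :=
  match f with
  | FMem i j => FMem (xi i) (xi j)
  | FEq i j => FEq (xi i) (xi j)
  | FFalse => FFalse
  | FNot g => FNot (ren xi g)
  | FAnd g h => FAnd (ren xi g) (ren xi h)
  | FOr g h => FOr (ren xi g) (ren xi h)
  | FImp g h => FImp (ren xi g) (ren xi h)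
  | FAll g => FAll (ren (upr xi) g)
  | FEx g => FEx (ren (upr xi) g)
  end.

Lemma sat_ext {M} (E : M -> M -> Prop) f : forall rho rho',
  (forall n, rho n = rho' n) -> (sat E rho f <-> sat E rho' f).
Proof.
  induction f; intros rho rho' H; simpl;
    try (rewrite ?H; tauto);
    try (rewrite (IHf rho rho' H); tauto);
    try (rewrite (IHf1 rho rho' H), (IHf2 rho rho' H); tauto).
  - split; intros H1 x; specialize (H1 x);
      [rewrite <- (IHf (scons x rho) (scons x rho')) | rewrite (IHf (scons x rho) (scons x rho'))];
      auto; intros [|n]; simpl; auto.
  - split; intros [x H1]; exists x;
      [rewrite <- (IHf (scons x rho) (scons x rho')) | rewrite (IHf (scons x rho) (scons x rho'))];
      auto; intros [|n]; simpl; auto.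
Qed.

Lemma sat_ren {M} (E : M -> M -> Prop) f : forall xi rho,
  sat E rho (ren xi f) <-> sat E (fun n => rho (xi n)) f.
Proof.
  induction f; intros xi rho; simpl; try tauto;
    try (rewrite IHf; tauto);
    try (rewrite IHf1, IHf2; tauto).
  - split; intros H1 x; specialize (H1 x).
    + rewrite IHf in H1. revert H1; apply sat_ext; intros [|n]; reflexivity.
    + rewrite IHf. revert H1; apply sat_ext; intros [|n]; reflexivity.
  - split; intros [x H1]; exists x.
    + rewrite IHf in H1. revert H1; apply sat_ext; intros [|n]; reflexivity.
    + rewrite IHf. revert H1; apply sat_ext; intros [|n]; reflexivity.
Qed.

Definition F_upair (z a b : nat) : form :=
  FAll (FIff (FMem 0 (S z)) (FOr (FEq 0 (S a)) (FEq 0 (S b)))).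
Definition F_opair (p a b : nat) : form :=
  FAll (FIff (FMem 0 (S p)) (FOr (F_upair 0 (S a) (S a)) (F_upair 0 (S a) (S b)))).
Definition F_rel (r x y : nat) : form :=
  FEx (FAnd (FMem 0 (S r)) (F_opair 0 (S x) (S y))).
Definition F_funon (f d : nat) : form :=
  FAnd (FAll (FImp (FMem 0 (S f)) (FEx (FEx (FAnd (F_opair 2 1 0) (FMem 1 (S (S (S d)))))))))
       (FAll (FImp (FMem 0 (S d)) (FEx (FAnd (F_rel (S (S f)) 1 0)
          (FAll (FImp (F_rel (S (S (S f))) 2 0) (FEq 0 1))))))).
Definition F_equi (a b : nat) : form :=
  FEx (FAnd (F_funon 0 (S a)) (FAnd
    (FAll (FAll (FAll (FImp (F_rel 3 2 0) (FImp (F_rel 3 1 0) (FEq 2 1))))))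
    (FAll (FIff (FMem 0 (S (S b))) (FEx (FAnd (FMem 0 (S (S (S a)))) (F_rel 2 0 1))))))).
(* Transitive and linearly ordered by membership; with Foundation this
   characterizes the ordinals (lemma [sat_ord]). *)
Definition F_ord (i : nat) : form :=
  FAnd (FAll (FAll (FImp (FMem 0 1) (FImp (FMem 1 (S (S i))) (FMem 0 (S (S i)))))))
  (FAnd (FAll (FAll (FAll (FImp (FMem 2 (S (S (S i)))) (FImp (FMem 1 (S (S (S i))))
           (FImp (FMem 0 (S (S (S i)))) (FImp (FMem 2 1) (FImp (FMem 1 0) (FMem 2 0)))))))))
        (FAll (FAll (FImp (FMem 1 (S (S i))) (FImp (FMem 0 (S (S i)))
           (FOr (FEq 1 0) (FOr (FMem 1 0) (FMem 0 1)))))))).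

Section FormulaMeaning.
Context {M : Type} (E : M -> M -> Prop).

Lemma sat_opair env p a b : sat E env (F_opair p a b) <-> is_opair E (env p) (env a) (env b).
Proof. unfold F_opair, F_upair, FIff, is_opair, is_upair; simpl. firstorder. Qed.

Lemma sat_rel env r x y : sat E env (F_rel r x y) <-> rel E (env r) (env x) (env y).
Proof. unfold F_rel, F_opair, F_upair, FIff, rel, is_opair, is_upair; simpl. firstorder. Qed.

Lemma sat_equi env a b : sat E env (F_equi a b) <-> equinumerous E (env a) (env b).
Proof.
  unfold F_equi, F_funon, F_rel, F_opair, F_upair, FIff, equinumerous, is_function_on, rel,
    is_opair, is_upair; simpl; firstorder.
Qed.

End FormulaMeaning.

Opaque F_upair F_opair F_rel F_funon F_equi.

Section ZFCminusFacts.
Context {M : Type} (E : M -> M -> Prop) (HZ : ZFCminus E).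

Lemma ax_pair : Ax_Pair E. Proof. apply HZ. Qed.
Lemma ax_union : Ax_Union E. Proof. apply HZ. Qed.
Lemma ax_inf : Ax_Inf E. Proof. apply HZ. Qed.
Lemma sch_found : Sch_Found E. Proof. apply HZ. Qed.
Lemma sch_repl : Sch_Repl E. Proof. apply HZ. Qed.

Lemma extP a b : (forall z, E z a <-> E z b) -> a = b.
Proof. apply HZ. Qed.

Lemma sep (phi : form) rho a : exists b, forall x, E x b <-> (E x a /\ sat1 E phi rho x).
Proof. apply HZ. Qed.

Lemma upair_unique p q a b : is_upair E p a b -> is_upair E q a b -> p = q.
Proof. unfold is_upair; intros H1 H2; apply extP; intro z; rewrite H1, H2; tauto. Qed.

Lemma opair_unique p q a b : is_opair E p a b -> is_opair E q a b -> p = q.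
Proof. unfold is_opair; intros H1 H2; apply extP; intro z; rewrite H1, H2; tauto. Qed.

Lemma succ_unique p q a : is_succ E p a -> is_succ E q a -> p = q.
Proof. unfold is_succ; intros H1 H2; apply extP; intro z; rewrite H1, H2; tauto. Qed.

Lemma opair_exists a b : exists p, is_opair E p a b.
Proof.
  destruct (ax_pair a a) as [u1 Hu1], (ax_pair a b) as [u2 Hu2], (ax_pair u1 u2) as [p Hp].
  exists p. intro z. rewrite (Hp z). split.
  - intros [H|H]; subst; auto.
  - intros [H|H]; [left|right]; eapply upair_unique; eauto.
Qed.

Lemma opair_inj p a b c d : is_opair E p a b -> is_opair E p c d -> a = c /\ b = d.
Proof.
  intros H1 H2.
  assert (Hac : a = c).
  { destruct (ax_pair a a) as [u Hu].
    assert (Hup : E u p) by (apply H1; auto).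
    apply H2 in Hup. destruct Hup as [Hup|Hup];
      assert (Hcu : E c u) by (apply Hup; auto); apply Hu in Hcu; destruct Hcu; auto. }
  subst c. split; auto.
  destruct (ax_pair a b) as [v Hv], (ax_pair a d) as [w Hw].
  assert (Ev : E v p) by (apply H1; auto). assert (Ew : E w p) by (apply H2; auto).
  apply H2 in Ev. apply H1 in Ew.
  assert (Hb : E b v) by (apply Hv; auto). assert (Hd : E d w) by (apply Hw; auto).
  destruct Ev as [Ev|Ev]; apply Ev in Hb; destruct Ew as [Ew|Ew]; apply Ew in Hd;
    destruct Hb; destruct Hd; subst; auto.
Qed.

Lemma found_min b : (exists z, E z b) -> exists m, E m b /\ forall z, E z b -> ~ E z m.
Proof.
  intros [z Hz].
  destruct (sch_found (FMem 0 1) (fun _ => b)) as [m [Hm H]].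
  - exists z. exact Hz.
  - exists m; split; [exact Hm|]. intros y Hy Hym. exact (H y Hym Hy).
Qed.

Lemma not_self x : ~ E x x.
Proof.
  intro Hx.
  destruct (sch_found (FEq 0 1) (fun _ => x)) as [m [Hm H]].
  - exists x. reflexivity.
  - unfold sat1 in Hm; simpl in Hm. subst m. exact (H x Hx eq_refl).
Qed.

Lemma ord_trans a : ordinal E a -> Defs.transitive E a.
Proof. intros H; apply H. Qed.

Lemma ord_elem a x : ordinal E a -> E x a -> ordinal E x.
Proof.
  intros [Ht [H2 [H3 [H4 H5]]]] Hx. repeat split.
  - intros y z Hzy Hyx. assert (E y a) by eauto. assert (E z a) by eauto. eauto.
  - intros y Hy. apply H2. eauto.
  - intros u v w Hu Hv Hw. apply H3; eauto.
  - intros u v Hu Hv. apply H4; eauto.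
  - intros b Hb Hne. apply H5; eauto.
Qed.

(* A transitive proper subset of an ordinal is an element of it: it is the
   least element of the difference. *)
Lemma sub_mem a d : ordinal E a -> Defs.transitive E d -> (forall z, E z d -> E z a) ->
  d <> a -> E d a.
Proof.
  intros Ha Hd Hsub Hne.
  destruct (sep (FNot (FMem 0 1)) (fun _ => d) a) as [c Hc].
  assert (Hc' : forall x, E x c <-> E x a /\ ~ E x d)
    by (intro x; rewrite Hc; unfold sat1; simpl; tauto).
  assert (Hex : exists z, E z c).
  { apply NNPP; intro Hn. apply Hne. apply extP. intro z. split; auto.
    intro Hz. apply NNPP; intro Hzd. apply Hn. exists z. apply Hc'; auto. }
  destruct Ha as [Hta [H2 [H3 [H4 H5]]]].
  destruct (H5 c (fun z Hz => proj1 (proj1 (Hc' z) Hz)) Hex) as [m [Hm Hmin]].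
  apply Hc' in Hm. destruct Hm as [Hma Hmd].
  assert (m = d).
  { apply extP. intro z. split.
    - intro Hz. assert (E z a) by eauto. apply NNPP; intro Hzd. apply (Hmin z); auto.
      apply Hc'; auto.
    - intro Hz. assert (Hza : E z a) by auto. destruct (H4 z m Hza Hma) as [->|[H|H]]; auto.
      + contradiction.
      + exfalso. apply Hmd. eauto. }
  subst; auto.
Qed.

(* Trichotomy: the intersection of a and b is a transitive subset of both,
   and it cannot be a proper subset of both, since it would then be an
   element of itself. *)
Lemma ord_tri a b : ordinal E a -> ordinal E b -> E a b \/ a = b \/ E b a.
Proof.
  intros Ha Hb.
  destruct (sep (FMem 0 1) (fun _ => b) a) as [d Hd].
  assert (Hd' : forall x, E x d <-> E x a /\ E x b)
    by (intro x; rewrite Hd; unfold sat1; simpl; tauto).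
  assert (Htd : Defs.transitive E d).
  { intros y z Hzy Hyd. apply Hd' in Hyd. apply Hd'. destruct Hyd.
    split; eapply ord_trans; eauto. }
  assert (Hda : forall z, E z d -> E z a) by (intros z Hz; apply Hd' in Hz; apply Hz).
  assert (Hdb : forall z, E z d -> E z b) by (intros z Hz; apply Hd' in Hz; apply Hz).
  destruct (classic (d = a)) as [Hea|Hea]; destruct (classic (d = b)) as [Heb|Heb].
  - right; left; congruence.
  - left. subst d. apply sub_mem; auto.
  - right; right. subst d. apply sub_mem; auto.
  - exfalso. apply (not_self d). apply Hd'; split; apply sub_mem; auto.
Qed.

Lemma ord_of_ords a : Defs.transitive E a -> (forall x, E x a -> ordinal E x) -> ordinal E a.
Proof.
  intros Ht Ho. repeat split; auto.
  - intros x _; apply not_self.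
  - intros x y z _ _ Hz Hxy Hyz. destruct (Ho z Hz) as [Htz _]. eauto.
  - intros x y Hx Hy. destruct (ord_tri x y (Ho x Hx) (Ho y Hy)) as [H|[H|H]]; auto.
  - intros b _ Hne. apply found_min; auto.
Qed.

Lemma ord_succ a s : ordinal E a -> is_succ E s a -> ordinal E s.
Proof.
  intros Ha Hs. apply ord_of_ords.
  - intros y z Hzy Hys. apply Hs in Hys. apply Hs. left. destruct Hys as [H| ->].
    + eapply ord_trans; eauto.
    + auto.
  - intros x Hx. apply Hs in Hx. destruct Hx as [H| ->]; [eapply ord_elem|]; eauto.
Qed.

Lemma ord_le_sub a b : ordinal E b -> (E a b \/ a = b) -> forall z, E z a -> E z b.
Proof. intros Hb [H| ->] z Hz; auto. eapply ord_trans; eauto. Qed.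

Lemma ord_upper_bound a b : ordinal E a -> ordinal E b ->
  exists d, ordinal E d /\ (forall z, E z a -> E z d) /\ (forall z, E z b -> E z d).
Proof.
  intros Ha Hb. destruct (ord_tri a b Ha Hb) as [H|[<-|H]].
  - exists b. split; [auto|split; [|auto]]. exact (ord_le_sub a b Hb (or_introl H)).
  - exists a. auto.
  - exists a. split; [auto|split; [auto|]]. exact (ord_le_sub b a Ha (or_introl H)).
Qed.

Lemma nat_elem n y : natural_number E n -> (E y n \/ y = n) -> natural_number E y.
Proof.
  intros [Ho Hn] Hy. split.
  - destruct Hy as [H| ->]; [eapply ord_elem|]; eauto.
  - intros w Hw. apply Hn. destruct Hy as [Hy| ->]; auto.
    left. destruct Hw as [Hw| ->]; auto. eapply ord_trans; eauto.
Qed.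

Lemma sat_ord env i : sat E env (F_ord i) <-> ordinal E (env i).
Proof.
  unfold F_ord; simpl. split.
  - intros [H1 [H3 H4]]. repeat split.
    + intros y z Hzy Hy. eapply H1; eauto.
    + intros x _. apply not_self; auto.
    + intros x y z Hx Hy Hz. eapply H3; eauto.
    + intros x y Hx Hy. apply H4; auto.
    + intros b _ Hne. apply found_min; auto.
  - intros [Ht [_ [H3 [H4 _]]]]. split; [|split].
    + intros y z Hzy Hy. eapply Ht; eauto.
    + intros x y z Hx Hy Hz. eapply H3; eauto.
    + intros x y Hx Hy. apply H4; auto.
Qed.

Opaque F_ord.

Lemma rel_dom f d x y : is_function_on E f d -> rel E f x y -> E x d.
Proof.
  intros [H1 _] [p [Hp Ho]]. destruct (H1 p Hp) as [x0 [y0 [Ho' Hx0]]].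
  destruct (opair_inj _ _ _ _ _ Ho Ho'); subst; auto.
Qed.

Lemma fun_val f d x y y' : is_function_on E f d -> rel E f x y -> rel E f x y' -> y = y'.
Proof.
  intros Hf H1 H2. assert (Hx : E x d) by (eapply rel_dom; eauto).
  destruct Hf as [_ Hf]. destruct (Hf x Hx) as [z [_ Hz]].
  rewrite (Hz y H1), (Hz y' H2). reflexivity.
Qed.

Definition xi_graph (n : nat) : nat := match n with 0 => 0 | 1 => 2 | S (S k) => S (S (S k)) end.

Lemma graph (psi : form) rho a :
  (forall x, E x a -> exists y, sat2 E psi rho y x /\ forall y', sat2 E psi rho y' x -> y' = y) ->
  exists k, (forall p, E p k -> exists x y, is_opair E p x y /\ E x a) /\
    (forall x y, rel E k x y <-> E x a /\ sat2 E psi rho y x).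
Proof.
  intros Hf.
  set (chi := FEx (FAnd (ren xi_graph psi) (F_opair 1 2 0))).
  assert (Hchi : forall q x, sat2 E chi rho q x <->
                             exists y, sat2 E psi rho y x /\ is_opair E q x y).
  { intros q x. unfold chi, sat2. simpl. split; intros [y [H1 H2]]; exists y.
    - rewrite sat_ren in H1. rewrite sat_opair in H2. simpl in H2. split; auto.
      revert H1; apply sat_ext. intros [|[|n]]; reflexivity.
    - rewrite sat_ren, sat_opair. simpl. split; auto.
      revert H1; apply sat_ext. intros [|[|n]]; reflexivity. }
  destruct (sch_repl chi rho a) as [k Hk].
  { intros x Hx. destruct (Hf x Hx) as [y [Hy Hu]].
    destruct (opair_exists x y) as [q Hq]. exists q. split.
    - apply Hchi. eauto.
    - intros q' Hq'. apply Hchi in Hq'. destruct Hq' as [y' [Hy' Hq']].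
      apply Hu in Hy'. subst. eapply opair_unique; eauto. }
  exists k. split.
  - intros p Hp. apply Hk in Hp. destruct Hp as [x [Hx Hc]]. apply Hchi in Hc.
    destruct Hc as [y [_ Hq]]. eauto.
  - intros x y. split.
    + intros [p [Hp Hpo]]. apply Hk in Hp. destruct Hp as [x0 [Hx0 Hc]]. apply Hchi in Hc.
      destruct Hc as [y0 [Hy0 Hq]]. destruct (opair_inj _ _ _ _ _ Hpo Hq). subst. auto.
    + intros [Hx Hy]. destruct (opair_exists x y) as [q Hq]. exists q. split; auto.
      apply Hk. exists x. split; auto. apply Hchi. eauto.
Qed.

Lemma equi_refl a : equinumerous E a a.
Proof.
  destruct (graph (FEq 0 1) (fun _ => a) a) as [k [Hk1 Hk2]].
  { intros x Hx. exists x. unfold sat2; simpl. split; auto. }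
  assert (Hr : forall x y, rel E k x y <-> E x a /\ y = x).
  { intros x y. rewrite Hk2. unfold sat2; simpl. tauto. }
  exists k. split; [split|split].
  - exact Hk1.
  - intros x Hx. exists x. split; [apply Hr; auto|]. intros y' Hy'. apply Hr in Hy'. apply Hy'.
  - intros x x' y H1 H2. apply Hr in H1. apply Hr in H2. destruct H1, H2; congruence.
  - intros y. split.
    + intros Hy. exists y. split; auto. apply Hr. auto.
    + intros [x [Hx Hxy]]. apply Hr in Hxy. destruct Hxy; subst; auto.
Qed.

Lemma equi_trans a b c : equinumerous E a b -> equinumerous E b c -> equinumerous E a c.
Proof.
  intros [g [Hg [Hgi Hgr]]] [h [Hh [Hhi Hhr]]].
  set (psi := FEx (FAnd (F_rel 3 2 0) (F_rel 4 0 1))).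
  set (rho := scons g (scons h (fun _ => g))).
  assert (Hpsi : forall y x, sat2 E psi rho y x <-> exists u, rel E g x u /\ rel E h u y).
  { intros y x. unfold psi, sat2. simpl. setoid_rewrite sat_rel. simpl. tauto. }
  assert (Hval : forall x, E x a -> exists y, (exists u, rel E g x u /\ rel E h u y) /\
                    forall y', (exists u, rel E g x u /\ rel E h u y') -> y' = y).
  { intros x Hx. destruct Hg as [_ Hg2]. destruct (Hg2 x Hx) as [u [Hu Huu]].
    assert (Hub : E u b) by (apply Hgr; eauto).
    destruct Hh as [_ Hh2]. destruct (Hh2 u Hub) as [y [Hy Hyu]].
    exists y. split; [eauto|]. intros y' [u' [H1 H2]].
    apply Huu in H1. subst u'. apply Hyu; auto. }
  destruct (graph psi rho a) as [k [Hk1 Hk2]].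
  { intros x Hx. destruct (Hval x Hx) as [y [Hy Hu]]. exists y.
    split; [apply Hpsi; exact Hy|]. intros y' Hy'. apply Hu, Hpsi, Hy'. }
  assert (Hr : forall x y, rel E k x y <-> E x a /\ exists u, rel E g x u /\ rel E h u y).
  { intros x y. rewrite Hk2, Hpsi. tauto. }
  exists k. split; [split|split].
  - exact Hk1.
  - intros x Hx. destruct (Hval x Hx) as [y [Hy Hu]]. exists y.
    split; [apply Hr; auto|]. intros y' Hy'. apply Hu. apply Hr in Hy'. apply Hy'.
  - intros x x' y H1 H2. apply Hr in H1. apply Hr in H2.
    destruct H1 as [_ [u [H1 H1']]]. destruct H2 as [_ [u' [H2 H2']]].
    assert (u = u') by (eapply Hhi; eauto). subst u'. eapply Hgi; eauto.
  - intros y. split.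
    + intros Hy. apply Hhr in Hy. destruct Hy as [u [Hu Huy]]. apply Hgr in Hu.
      destruct Hu as [x [Hx Hxu]]. exists x. split; auto. apply Hr. eauto.
    + intros [x [Hx Hxy]]. apply Hr in Hxy. destruct Hxy as [_ [u [H1 H2]]].
      apply Hhr. exists u. split; auto. apply Hgr. eauto.
Qed.

Definition succ_closed (w : M) : Prop := forall v, E v w -> exists s, is_succ E s v /\ E s w.

(* An ordinal closed under successor which is not a natural number: the
   ordinals of the inductive set of Infinity that are subsets of it. *)
Lemma omega_exists : exists w, ordinal E w /\ succ_closed w /\ ~ natural_number E w.
Proof.
  destruct ax_inf as [x0 [[e [He Hex]] Hcl]].
  destruct (sep (FAnd (F_ord 0) (FAll (FImp (FMem 0 1) (FMem 0 2)))) (fun _ => x0) x0)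
    as [w Hw].
  assert (Hw' : forall v, E v w <-> E v x0 /\ ordinal E v /\ forall z, E z v -> E z x0).
  { intro v. rewrite Hw. unfold sat1. simpl. rewrite sat_ord. simpl. tauto. }
  assert (Hcl' : succ_closed w).
  { intros v Hv. apply Hw' in Hv. destruct Hv as [Hv0 [Hvo Hvs]].
    destruct (Hcl v Hv0) as [s [Hs Hs0]]. exists s. split; auto. apply Hw'.
    split; [auto|split].
    - eapply ord_succ; eauto.
    - intros z Hz. apply Hs in Hz. destruct Hz as [Hz| ->]; auto. }
  assert (Hwo : ordinal E w).
  { apply ord_of_ords.
    - intros y z Hzy Hyw. apply Hw' in Hyw. destruct Hyw as [Hy0 [Hyo Hys]]. apply Hw'.
      split; [auto|split].
      + eapply ord_elem; eauto.
      + intros u Hu. apply Hys. exact (ord_trans y Hyo z u Hu Hzy).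
    - intros v Hv. apply Hw' in Hv. apply Hv. }
  assert (Hew : E e w).
  { apply Hw'. split; [exact Hex|split].
    - apply ord_of_ords; [intros y z H1 H2|intros x H1]; exfalso; eapply He; eauto.
    - intros z Hz; exfalso; eapply He; eauto. }
  exists w. split; [auto|split; [auto|]].
  intros [_ Hn]. destruct (Hn w (or_intror eq_refl)) as [Hemp|[z Hz]].
  - eapply Hemp; eauto.
  - assert (Hzw : E z w) by (apply Hz; auto). destruct (Hcl' z Hzw) as [s [Hs Hsw]].
    assert (s = w) by (eapply succ_unique; eauto). subst s. eapply not_self; eauto.
Qed.

(* The pigeonhole principle, in the form: no natural number v admits a
   relation f that is functional and maps v onto its successor v + 1. *)
Definition surjects_onto_succ (v f : M) : Prop :=
  (forall p, E p f -> exists a b, is_opair E p a b) /\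
  (forall x, (E x v \/ x = v) -> exists y, E y v /\ rel E f y x) /\
  (forall y x x', rel E f y x -> rel E f y x' -> x = x').

Definition swap_rel (k ys a c : M) : Prop :=
  (a = k /\ c = ys) \/ (a = ys /\ c = k) \/ (a <> k /\ a <> ys /\ c = a).

Lemma swap_rel_fun k ys a c c' : k <> ys -> swap_rel k ys a c -> swap_rel k ys a c' -> c = c'.
Proof. unfold swap_rel; intros; intuition congruence. Qed.

Lemma swap_rel_inj k ys a a' c : k <> ys -> swap_rel k ys a c -> swap_rel k ys a' c -> a = a'.
Proof. unfold swap_rel; intros; intuition congruence. Qed.

Lemma swap_rel_total k ys a : exists c, swap_rel k ys a c.
Proof.
  unfold swap_rel. destruct (classic (a = k)) as [->|H1]; [eauto|].
  destruct (classic (a = ys)) as [->|H2]; eauto 10.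
Qed.

Lemma swap_exists f k ys : k <> ys -> (forall p, E p f -> exists a b, is_opair E p a b) ->
  exists f', (forall q, E q f' -> exists a b, is_opair E q a b) /\
    forall c x, rel E f' c x <-> exists a, swap_rel k ys a c /\ rel E f a x.
Proof.
  intros Hne Hap.
  set (chi := FEx (FEx (FEx (FAnd (F_opair 4 2 1) (FAnd (F_opair 3 0 1)
     (FOr (FAnd (FEq 2 5) (FEq 0 6)) (FOr (FAnd (FEq 2 6) (FEq 0 5))
        (FAnd (FNot (FEq 2 5)) (FAnd (FNot (FEq 2 6)) (FEq 0 2)))))))))).
  set (rho := scons k (scons ys (fun _ => k))).
  assert (Hchi : forall q p, sat2 E chi rho q p <->
     exists a b c, is_opair E p a b /\ is_opair E q c b /\ swap_rel k ys a c).
  { intros q p. unfold chi, sat2, swap_rel. simpl. setoid_rewrite sat_opair. simpl. tauto. }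
  destruct (sch_repl chi rho f) as [f' Hf'].
  { intros p Hp. destruct (Hap p Hp) as [a [b Hab]].
    destruct (swap_rel_total k ys a) as [c Hc].
    destruct (opair_exists c b) as [q Hq]. exists q. split.
    - apply Hchi. eauto 10.
    - intros q' Hq'. apply Hchi in Hq'. destruct Hq' as [a' [b' [c' [H1 [H2 H3]]]]].
      destruct (opair_inj _ _ _ _ _ Hab H1). subst a' b'.
      assert (c' = c) by (eapply swap_rel_fun; eauto). subst c'. eapply opair_unique; eauto. }
  exists f'. split.
  - intros q Hq. apply Hf' in Hq. destruct Hq as [p [_ Hc]]. apply Hchi in Hc.
    destruct Hc as [a [b [c [_ [H _]]]]]. eauto.
  - intros c x. split.
    + intros [q [Hq Hqo]]. apply Hf' in Hq. destruct Hq as [p [Hp Hc]]. apply Hchi in Hc.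
      destruct Hc as [a [b [c0 [H1 [H2 H3]]]]].
      destruct (opair_inj _ _ _ _ _ Hqo H2). subst c0 b.
      exists a. split; auto. exists p; auto.
    + intros [a [Ht [p [Hp Hpo]]]]. destruct (opair_exists c x) as [q Hq].
      exists q. split; auto. apply Hf'. exists p. split; auto. apply Hchi. eauto 10.
Qed.

(* The induction step of the pigeonhole principle: if m = k + 1 maps onto
   m + 1, then k maps onto k + 1.  Let ys be the preimage of m; after
   exchanging ys and k in the domain, the preimage of m is k, and dropping
   k leaves a map of k onto m = k + 1. *)
Lemma surjects_onto_succ_pred m k g : is_succ E m k -> surjects_onto_succ m g ->
  exists g', surjects_onto_succ k g'.
Proof.
  intros Hk [Hap [Hcov Hfun]].
  destruct (Hcov m (or_intror eq_refl)) as [ys [Hys Hysm]].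
  assert (Hxm : forall x, (E x k \/ x = k) -> E x m) by (intros x Hx; apply Hk; auto).
  assert (Hnotm : forall x, E x m -> rel E g ys x -> False).
  { intros x Hx Hr. rewrite (Hfun ys x m Hr Hysm) in Hx. exact (not_self m Hx). }
  destruct (classic (ys = k)) as [->|Hne].
  - exists g. split; [auto|split; [|auto]].
    intros x Hx. apply Hxm in Hx. destruct (Hcov x (or_introl Hx)) as [y [Hy Hyx]].
    exists y. split; auto. apply Hk in Hy. destruct Hy as [Hy| ->]; auto.
    exfalso. eapply Hnotm; eauto.
  - assert (Hysk : E ys k) by (apply Hk in Hys; destruct Hys; [auto|congruence]).
    assert (Hkys : k <> ys) by congruence.
    destruct (swap_exists g k ys Hkys Hap) as [g' [Hap' Hr']].
    exists g'. split; [auto|split].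
    + intros x Hx. apply Hxm in Hx. destruct (Hcov x (or_introl Hx)) as [y [Hy Hyx]].
      destruct (swap_rel_total k ys y) as [c Hc]. exists c. split.
      * destruct Hc as [[H1 H2]|[[H1 H2]|[H1 [H2 H3]]]].
        -- rewrite H2; exact Hysk.
        -- exfalso. rewrite H1 in Hyx. exact (Hnotm x Hx Hyx).
        -- rewrite H3. apply Hk in Hy. destruct Hy; [auto|congruence].
      * apply Hr'. eauto.
    + intros c x x' H1 H2. apply Hr' in H1. apply Hr' in H2.
      destruct H1 as [a [Ha Hax]]. destruct H2 as [a' [Ha' Hax']].
      assert (a = a') by (eapply swap_rel_inj; eauto). subst a'. eapply Hfun; eauto.
Qed.

(* Pigeonhole principle: take the least counterexample v <= m0; v is a
   natural number, nonempty since it is onto v + 1, hence a successor k + 1,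
   and then k is a smaller counterexample. *)
Lemma pigeonhole m0 f : natural_number E m0 -> ~ surjects_onto_succ m0 f.
Proof.
  intros Hm0 Hf.
  set (Phi := FAnd (FOr (FMem 0 1) (FEq 0 1)) (FEx (FAnd
     (FAll (FImp (FMem 0 1) (FEx (FEx (F_opair 2 1 0)))))
     (FAnd (FAll (FImp (FOr (FMem 0 2) (FEq 0 2)) (FEx (FAnd (FMem 0 3) (F_rel 2 0 1)))))
           (FAll (FAll (FAll (FImp (F_rel 3 2 1) (FImp (F_rel 3 2 0) (FEq 1 0)))))))))).
  assert (HPhi : forall v, sat1 E Phi (fun _ => m0) v <->
                           (E v m0 \/ v = m0) /\ exists f, surjects_onto_succ v f).
  { intro v. unfold Phi, sat1, surjects_onto_succ. simpl.
    setoid_rewrite sat_opair. setoid_rewrite sat_rel. simpl. tauto. }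
  destruct (sch_found Phi (fun _ => m0)) as [m [Hm Hmin]].
  { exists m0. apply HPhi. eauto. }
  destruct (proj1 (HPhi m) Hm) as [Hmm0 [g Hg]].
  destruct (nat_elem m0 m Hm0 Hmm0) as [_ Hmn].
  destruct (Hmn m (or_intror eq_refl)) as [Hemp|[k Hk]].
  - destruct Hg as [_ [Hcov _]]. destruct (Hcov m (or_intror eq_refl)) as [y [Hy _]].
    exact (Hemp y Hy).
  - assert (Hkm : E k m) by (apply Hk; auto).
    apply (Hmin k Hkm). apply HPhi. split.
    + left. exact (ord_le_sub m m0 (proj1 Hm0) Hmm0 k Hkm).
    + exact (surjects_onto_succ_pred m k g Hk Hg).
Qed.

(* No natural number is in bijection with an ordinal d including omega:
   below omega this contradicts the pigeonhole principle (n + 1 is included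
   in d), and omega and its elements beyond are not natural numbers. *)
Lemma natural_not_equinumerous w d n : ordinal E w -> succ_closed w -> ~ natural_number E w ->
  ordinal E d -> (forall z, E z w -> E z d) -> natural_number E n -> ~ equinumerous E n d.
Proof.
  intros Hwo Hwcl Hwn Hdo Hwd Hn [k [Hk [_ Hkr]]].
  destruct (ord_tri n w (proj1 Hn) Hwo) as [Hnw|[-> | Hwn']].
  - destruct (Hwcl n Hnw) as [s [Hs Hsw]].
    apply (pigeonhole n k Hn). split; [|split].
    + intros p Hp. destruct (proj1 Hk p Hp) as [a [b [Hab _]]]. eauto.
    + intros x Hx. apply Hkr. exact (ord_trans d Hdo s x (proj2 (Hs x) Hx) (Hwd s Hsw)).
    + intros y x x'. apply (fun_val k n); exact Hk.
  - contradiction.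
  - exact (Hwn (nat_elem n w Hn (or_introl Hwn'))).
Qed.

(* The cardinality of an ordinal d: the least ordinal mu <= d in bijection
   with d, found by Foundation. *)
Lemma cardinal_of d : ordinal E d ->
  exists mu, cardinal E mu /\ (E mu d \/ mu = d) /\ equinumerous E mu d.
Proof.
  intros Hdo.
  set (Phi := FAnd (FOr (FMem 0 1) (FEq 0 1)) (F_equi 0 1)).
  assert (HPhi : forall v, sat1 E Phi (fun _ => d) v <->
                           (E v d \/ v = d) /\ equinumerous E v d).
  { intro v. unfold Phi, sat1. simpl. rewrite sat_equi. simpl. tauto. }
  destruct (sch_found Phi (fun _ => d)) as [mu [Hmu Hmin]].
  { exists d. apply HPhi. split; auto. apply equi_refl. }
  destruct (proj1 (HPhi mu) Hmu) as [Hmud Hmueq].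
  exists mu. split; [split|auto].
  - destruct Hmud as [H| ->]; [eapply ord_elem; eauto|auto].
  - intros a Ha Hae. apply (Hmin a Ha). apply HPhi. split.
    + left. exact (ord_le_sub mu d Hdo Hmud a Ha).
    + exact (equi_trans a mu d Hae Hmueq).
Qed.

Lemma infinite_cardinal_of w d : ordinal E w -> succ_closed w -> ~ natural_number E w ->
  ordinal E d -> (forall z, E z w -> E z d) ->
  exists mu, infinite_cardinal E mu /\ equinumerous E mu d.
Proof.
  intros Hwo Hwcl Hwn Hdo Hwd.
  destruct (cardinal_of d Hdo) as [mu [Hmu [_ Hmueq]]].
  exists mu. split; [split; [exact Hmu|]|exact Hmueq].
  intros [n [Hn Hnmu]].
  exact (natural_not_equinumerous w d n Hwo Hwcl Hwn Hdo Hwd Hn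
           (equi_trans n mu d Hnmu Hmueq)).
Qed.

(* The range of a set-sized relation s never exhausts a proper class C:
   otherwise C would be the set of elements of the union of the union of
   s that lie in C. *)
Lemma proper_class_escapes theta rho s : proper_class E theta rho ->
  exists x, sat1 E theta rho x /\ ~ exists a, rel E s a x.
Proof.
  intros Hpc. apply NNPP; intro Hn.
  destruct (ax_union s) as [u1 Hu1]. destruct (ax_union u1) as [u2 Hu2].
  destruct (sep theta rho u2) as [c Hc]. apply Hpc. exists c. intro x. rewrite Hc.
  split; [tauto|]. intro Hx. split; auto.
  assert (Hr : exists a, rel E s a x) by (apply NNPP; intro Hr; apply Hn; eauto).
  destruct Hr as [a [p [Hp Hpo]]].
  destruct (ax_pair a x) as [u Hu].
  apply Hu2. exists u. split; [|apply Hu; right; reflexivity].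
  apply Hu1. exists p. split; [exact Hp|]. apply Hpo. right. exact Hu.
Qed.

(* DC_mu applied to "choose an element of C outside the range of the
   sequence built so far" yields an injective mu-sequence in C. *)
Lemma dc_injective_sequence mu theta rho : DC_scheme E mu -> ordinal E mu ->
  proper_class E theta rho ->
  exists f, is_function_on E f mu /\ (forall a x, rel E f a x -> sat1 E theta rho x) /\
    (forall a a' x, rel E f a x -> rel E f a' x -> a = a').
Proof.
  intros HDC Hmuo Hpc.
  set (phi := FNot (FEx (FAnd (FMem 0 2) (FEx (F_opair 1 0 2))))).
  assert (Hphi : forall z s, sat2 E phi (fun _ => mu) z s <-> ~ exists a, rel E s a z).
  { intros z s. unfold phi, sat2, rel. simpl. setoid_rewrite sat_opair. simpl.
    firstorder. }
  destruct (HDC phi theta (fun _ => mu) rho) as [f [Hf Hfv]].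
  { destruct (proper_class_escapes theta rho mu Hpc) as [x [Hx _]]. eauto. }
  { intros al s _ _ _. destruct (proper_class_escapes theta rho s Hpc) as [x [Hx Hxs]].
    exists x. split; [exact Hx|]. apply Hphi. exact Hxs. }
  assert (Hfval : forall a x, rel E f a x ->
                  sat1 E theta rho x /\ exists g, is_restriction E g f a /\ ~ exists b, rel E g b x).
  { intros a x Hax. destruct (Hfv a (rel_dom f mu a x Hf Hax)) as [y [g [Hy [Hg [Hty Hgy]]]]].
    rewrite (fun_val f mu a x y Hf Hax Hy). split; [exact Hty|]. exists g.
    split; [exact Hg|]. apply Hphi. exact Hgy. }
  assert (Hearlier : forall a a' x, E a a' -> rel E f a x -> rel E f a' x -> False).
  { intros a a' x Haa' H1 H2. destruct (Hfval a' x H2) as [_ [g [Hg Hgx]]].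
    apply Hgx. exists a. destruct H1 as [p [Hp Hpo]].
    exists p. split; [|exact Hpo]. apply Hg. eauto. }
  exists f. split; [exact Hf|split].
  - intros a x Hax. exact (proj1 (Hfval a x Hax)).
  - intros a a' x H1 H2.
    assert (Ha : ordinal E a) by exact (ord_elem mu a Hmuo (rel_dom f mu a x Hf H1)).
    assert (Ha' : ordinal E a') by exact (ord_elem mu a' Hmuo (rel_dom f mu a' x Hf H2)).
    destruct (ord_tri a a' Ha Ha') as [H|[H|H]]; [exfalso; eauto|exact H|exfalso; eauto].
Qed.

(* Moves the parameters of theta(x; rho) past those of [surj_formula]. *)
Definition xi_theta (n : nat) : nat := match n with 0 => 1 | S k => 6 + k end.

(* sigma(y, x; f, h, gamma, e, rho): x is in C and either y = h(a) is in
   gamma for the a with f(a) = x, or there is no such a and y = e. *)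
Definition surj_formula (theta : form) : form :=
  FAnd (ren xi_theta theta) (FOr
    (FEx (FAnd (F_rel 3 0 2) (FAnd (F_rel 4 0 1) (FMem 1 5))))
    (FAnd (FNot (FEx (FEx (FAnd (F_rel 4 1 3) (FAnd (F_rel 5 1 0) (FMem 0 6))))))
          (FEq 0 5))).

Definition surj_params (f h gamma e : M) (rho : nat -> M) : nat -> M :=
  scons f (scons h (scons gamma (scons e rho))).

Lemma sat_surj_formula theta rho f h gamma e y x :
  sat2 E (surj_formula theta) (surj_params f h gamma e rho) y x <->
  sat1 E theta rho x /\
    ((exists a, rel E f a x /\ rel E h a y /\ E y gamma) \/
     (~ (exists a b, rel E f a x /\ rel E h a b /\ E b gamma) /\ y = e)).
Proof.
  unfold surj_formula, surj_params, sat2, sat1. simpl. rewrite sat_ren.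
  setoid_rewrite sat_rel. simpl.
  assert (Htheta : sat E (fun n => scons y (scons x (scons f (scons h (scons gamma
                      (scons e rho))))) (xi_theta n)) theta <-> sat E (scons x rho) theta)
    by (apply sat_ext; intros [|n]; reflexivity).
  rewrite Htheta. tauto.
Qed.

Lemma surjection_from_sequence theta rho mu d gamma f h e :
  is_function_on E f mu -> (forall a x, rel E f a x -> sat1 E theta rho x) ->
  (forall a a' x, rel E f a x -> rel E f a' x -> a = a') ->
  is_function_on E h mu -> (forall y, E y d <-> exists a, E a mu /\ rel E h a y) ->
  (forall z, E z gamma -> E z d) -> E e gamma ->
  definable_surjection_onto E theta rho (surj_formula theta) (surj_params f h gamma e rho) gamma.
Proof.
  intros Hf HfC Hfinj Hh Hhr Hgd He.
  split; [|split].
  - intros y x H. apply sat_surj_formula in H. apply H.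
  - intros x Hx.
    destruct (classic (exists a b, rel E f a x /\ rel E h a b /\ E b gamma))
      as [[a [b [H1 [H2 H3]]]]|Hc].
    + exists b. split; [exact H3|split].
      * apply sat_surj_formula. split; [exact Hx|]. left. eauto.
      * intros y' Hy'. apply sat_surj_formula in Hy'.
        destruct Hy' as [_ [[a' [H1' [H2' _]]]|[Hn _]]].
        -- rewrite (Hfinj a' a x H1' H1) in H2'. exact (fun_val h mu a y' b Hh H2' H2).
        -- exfalso; apply Hn; eauto.
    + exists e. split; [exact He|split].
      * apply sat_surj_formula. auto.
      * intros y' Hy'. apply sat_surj_formula in Hy'.
        destruct Hy' as [_ [[a' [H1' [H2' H3']]]|[_ He']]]; [|exact He'].
        exfalso; apply Hc; eauto.
  - intros y Hy. destruct (proj1 (Hhr y) (Hgd y Hy)) as [a [Ha Hay]].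
    destruct (proj2 Hf a Ha) as [x [Hax _]].
    exists x. split; [exact (HfC a x Hax)|].
    apply sat_surj_formula. split; [exact (HfC a x Hax)|]. left; eauto.
Qed.
End ZFCminusFacts.

Theorem corollary6p5 (M : Type) (E : M -> M -> Prop) :
  ZFCminus E -> DC_ltOrd E ->
  forall (theta : form) (rho : nat -> M), proper_class E theta rho ->
  forall gamma : M, ordinal E gamma -> ~ is_empty E gamma ->
  exists (sigma : form) (rho' : nat -> M),
    definable_surjection_onto E theta rho sigma rho' gamma.
Proof.
  intros HZ HDC theta rho Hpc gamma Hg Hgne.
  assert (He : exists e, E e gamma) by (apply NNPP; intro Hn; apply Hgne; intros z Hz; eauto).
  destruct He as [e He].
  (* delta = max(gamma, omega) and its cardinality mu, with h : mu onto delta *)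
  destruct (omega_exists E HZ) as [w [Hwo [Hwcl Hwn]]].
  destruct (ord_upper_bound E HZ gamma w Hg Hwo) as [d [Hdo [Hgd Hwd]]].
  destruct (infinite_cardinal_of E HZ w d Hwo Hwcl Hwn Hdo Hwd)
    as [mu [Hmu [h [Hh [_ Hhr]]]]].
  destruct (dc_injective_sequence E HZ mu theta rho (HDC mu Hmu) (proj1 (proj1 Hmu)) Hpc)
    as [f [Hf [HfC Hfinj]]].
  exists (surj_formula theta), (surj_params f h gamma e rho).
  exact (surjection_from_sequence E HZ theta rho mu d gamma f h e Hf HfC Hfinj Hh Hhr Hgd He).
Qed.
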